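(* Let $k\ge3$, $1\le s\le k$, $r\le\min\{n_1,\dots,n_s\}$, $\mathcal A\in\mathbb R^{n_1}\otimes\cdots\otimes\mathbb R^{n_k}$ nonzero, and let $\{U_{[p]}\}$ be generated by the iAPD-ALS algorithm (described in the context). Then the number of columns of the matrices $U^{(i)}_{[p]}$ is eventually constant, equal to some positive integer $t\le r$, and there exists $N_0$ such that $f(U_{[p]})$ is nondecreasing in $p$ for all $p\ge N_0$.
   Context: Notation. $\mathrm V(m,n)=\{U\in\mathbb R^{n\times m}:U^{\mathsf T}U=I_m\}$; $\mathrm B(m,n)$: $n\times m$ real matrices with unit columns. $\mathcal A\tau(\mathbf u_1,\dots,\mathbf u_k)=\langle\mathcal A,\mathbf u_1\otimes\cdots\otimes\mathbf u_k\rangle$; $\mathcal A\tau_i(\mathbf u_1,\dots,\mathbf u_k)\in\mathbb R^{n_i}$ is the contraction of $\mathcal A$ with all $\mathbf u_l$, $l\ne i$. For $U=(U^{(1)},\dots,U^{(k)})$ with columns $\mathbf u^{(i)}_j$, $j\le t$: $f(U)=\sum_j\mathcal A\tau(\mathbf u^{(1)}_j,\dots,\mathbf u^{(k)}_j)^2$. $\operatorname{Polar}(X)$ is the set of $Q\in\mathrm V(m,n)$ maximizing $\langle Q,X\rangle$. iAPD-ALS algorithm (input $\mathcal A$, $r$, $\epsilon>0$). Choose $U_{[0]}\in\mathrm V(r,n_1)\times\cdots\times\mathrm V(r,n_s)\times\mathrm B(r,n_{s+1})\times\cdots\times\mathrm B(r,n_k)$ with $f(U_{[0]})>0$ and $\kappa\in(0,\sqrt{f(U_{[0]})/r})$.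 For $p=1,2,\dots$ ($t$ = current number of columns, $\mathbf u^{(i)}_{j,[q]}$ = $j$-th column of $U^{(i)}_{[q]}$), let $\mathbf x^i_{j,[p]}=(\mathbf u^{(1)}_{j,[p]},\dots,\mathbf u^{(i-1)}_{j,[p]},\mathbf u^{(i)}_{j,[p-1]},\dots,\mathbf u^{(k)}_{j,[p-1]})$, $\lambda^{i-1}_{j,[p]}=\mathcal A\tau(\mathbf x^i_{j,[p]})$, $\Lambda^{(i)}_{[p]}=\operatorname{diag}(\lambda^{i-1}_{j,[p]})_j$, $V^{(i)}_{[p]}=[\mathcal A\tau_i(\mathbf x^i_{j,[p]})]_j$. (1) For $i=1,\dots,s$ in turn pick $U^{(i)}_{[p]}\in\operatorname{Polar}(V^{(i)}_{[p]}\Lambda^{(i)}_{[p]})$, and if the smallest eigenvalue of $(U^{(i)}_{[p]})^{\mathsf T}V^{(i)}_{[p]}\Lambda^{(i)}_{[p]}$ is $<\epsilon$, instead pick $U^{(i)}_{[p]}\in\operatorname{Polar}(V^{(i)}_{[p]}\Lambda^{(i)}_{[p]}+\epsilon U^{(i)}_{[p-1]})$. (2) Truncation: with $J=\{j:|((U^{(s)}_{[p]})^{\mathsf T}V^{(s)}_{[p]})_{jj}|<\kappa\}$, delete columns in $J$ from $U^{(1)}_{[p]},\dots,U^{(s)}_{[p]}$ and $U^{(s+1)}_{[p-1]},\dots,U^{(k)}_{[p-1]}$ and set $t:=t-|J|$. (3) For $i=s+1,\dots,k$ in turn, $\mathbf u^{(i)}_{j,[p]}=\operatorname{sgn}(\lambda^{i-1}_{j,[p]})\mathcal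 A\tau_i(\mathbf x^i_{j,[p]})/\|\mathcal A\tau_i(\mathbf x^i_{j,[p]})\|$. Set $U_{[p]}=(U^{(1)}_{[p]},\dots,U^{(k)}_{[p]})$ and iterate indefinitely. *)

From HB Require Import structures.
From mathcomp Require Import all_boot all_order all_algebra.
From mathcomp Require Import reals.
Set Implicit Arguments. Unset Strict Implicit. Unset Printing Implicit Defensive.
Import Order.TTheory GRing.Theory Num.Theory.
Local Open Scope ring_scope.

(* Conventions: modes are 0-based, indexed by 'I_k; mode i has dimension n i.
   A "column" c : kcol R n is the k-tuple (u^{(1)}_j, ..., u^{(k)}_j) of the j-th
   columns of the factor matrices; a state U = (U^{(1)},...,U^{(k)}) with t
   columns is a sequence of t such columns. *)

Section Defs.
Variables (R : realType) (k : nat) (n : 'I_k -> nat).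

Definition multi_index := {dffun forall i : 'I_k, 'I_(n i)}.
Definition tensor := {ffun multi_index -> R}.
Definition kcol := forall i : 'I_k, 'cV[R]_(n i).
Definition col0 : kcol := fun i => 0.

Definition tau (A : tensor) (x : kcol) : R :=
  \sum_(idx : multi_index) A idx * \prod_(l : 'I_k) x l (idx l) 0.

Definition taui (A : tensor) (x : kcol) (i : 'I_k) : 'cV[R]_(n i) :=
  \col_(a < n i) \sum_(idx : multi_index | idx i == a)
      A idx * \prod_(l : 'I_k | l != i) x l (idx l) 0.

Definition fobj (A : tensor) (U : seq kcol) : R := \sum_(c <- U) (tau A c) ^+ 2.

Definition mx_of (U : seq kcol) (i : 'I_k) : 'M[R]_(n i, size U) :=
  \matrix_(a < n i, j < size U) (nth col0 U j) i a 0.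

Definition Vmat (A : tensor) (U : seq kcol) (i : 'I_k) : 'M[R]_(n i, size U) :=
  \matrix_(a < n i, j < size U) taui A (nth col0 U j) i a 0.
Definition lamrow (A : tensor) (U : seq kcol) : 'rV[R]_(size U) :=
  \row_(j < size U) tau A (nth col0 U j).

Definition upd_mode (U : seq kcol) (i : 'I_k) (M : 'M[R]_(n i, size U)) : seq kcol :=
  [seq @dfwith _ (fun l => 'cV[R]_(n l)) (nth col0 U j) i (col j M)
  | j : 'I_(size U) <- enum 'I_(size U)].

Definition vnorm m (v : 'cV[R]_m) : R := Num.sqrt (\sum_(a < m) (v a 0) ^+ 2).
End Defs.

Definition orthonormal_cols (R : realType) p m (Q : 'M[R]_(p, m)) : Prop :=
  Q^T *m Q = 1%:M.

Definition polar (R : realType) p m (X Q : 'M[R]_(p, m)) : Prop :=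
  orthonormal_cols Q /\
  forall Q' : 'M[R]_(p, m), orthonormal_cols Q' -> \tr (Q'^T *m X) <= \tr (Q^T *m X).

Definition small_eig (R : realType) m (M : 'M[R]_m) (eps : R) : Prop :=
  exists a : R, eigenvalue M a /\ a < eps.

Section Algo.
Variables (R : realType) (k : nat) (n : 'I_k -> nat).

(* Step (1) for one mode i <= s: from the current state U (modes < i already
   updated at iteration p, modes >= i from iteration p-1) to U'. *)
Definition polar_step (A : tensor R n) (eps : R) (i : 'I_k) (U U' : seq (kcol R n)) : Prop :=
  let X := Vmat A U i *m diag_mx (lamrow A U) in
  exists Q : 'M[R]_(n i, size U),
    polar X Q /\
    (small_eig (Q^T *m X) eps ->
       exists Q2 : 'M[R]_(n i, size U),
         polar (X + eps *: mx_of U i) Q2 /\ U' = upd_mode Q2) /\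
    (~ small_eig (Q^T *m X) eps -> U' = upd_mode Q).

(* Step (2): truncation.  prev = state before updating mode s (so that
   V^{(s)} = [A tau_s(x^s_j)]_j is computed from it), cur = after.  Column j is
   kept iff |((U^{(s)})^T V^{(s)})_{jj}| >= kappa. *)
Definition truncate (A : tensor R n) (smax : 'I_k) (kappa : R)
    (prev cur : seq (kcol R n)) : seq (kcol R n) :=
  [seq pc.2 | pc : kcol R n * kcol R n <- zip prev cur &
     kappa <= `| \sum_(a < n smax) pc.2 smax a 0 * taui A pc.1 smax a 0 |].

Definition als_update (A : tensor R n) (smax : 'I_k) (c : kcol R n) : kcol R n :=
  foldl (fun (c : kcol R n) (i : 'I_k) =>
           if (smax < i)%N then
             @dfwith _ (fun l => 'cV[R]_(n l)) c i
               ((Num.sg (tau A c) / vnorm (taui A c i)) *: taui A c i)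
           else c)
        c (enum 'I_k).

(* One iteration p of iAPD-ALS (smax = s - 1 is the 0-based index of mode s). *)
Definition iapd_step (A : tensor R n) (smax : 'I_k) (eps kappa : R)
    (U U' : seq (kcol R n)) : Prop :=
  exists curs : nat -> seq (kcol R n),
    curs 0%N = U /\
    (forall i : 'I_k, (i <= smax)%N -> polar_step A eps i (curs i) (curs i.+1)) /\
    U' = map (als_update A smax) (truncate A smax kappa (curs smax) (curs smax.+1)).

Definition init_ok (smax : 'I_k) (r : nat) (U : seq (kcol R n)) : Prop :=
  size U = r /\
  (forall i : 'I_k, (i <= smax)%N -> orthonormal_cols (mx_of U i)) /\
  (forall i : 'I_k, (smax < i)%N -> forall j : 'I_(size U), vnorm (col j (mx_of U i)) = 1).
End Algo.

From Pilot Require Import Defs.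
From HB Require Import structures.
From mathcomp Require Import all_boot all_order all_algebra.
From mathcomp Require Import reals boolp.
From mathcomp Require Import ring lra.
Import Order.TTheory GRing.Theory Num.Theory.
Local Open Scope ring_scope.

Set Implicit Arguments. Unset Strict Implicit. Unset Printing Implicit Defensive.

(* Every sweep of iAPD-ALS is monotone except for the truncation, which only deletes columns.
   Writing X = V^(i) Lambda^(i), one has tr(U^(i)T X) = f(U), and replacing U^(i) by Q gives
   f >= 2 tr(Q^T X) - f(U); the (possibly eps-regularised) polar factor does not decrease
   tr(Q^T X).  The normalised ALS update turns lambda_j into +-|A tau_i(x_j)| >= |lambda_j| by
   Cauchy--Schwarz.  Truncation deletes exactly the columns with |lambda_j| < kappa; every
   surviving column contributes at least kappa^2, so t kappa^2 <= f(U) is invariant, and it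
   forces some column to survive the next truncation.  Initially r kappa^2 < f(U_0) by the
   choice of kappa.  Hence t is nonincreasing and positive, so eventually constant, and from
   then on truncation deletes nothing and f is nondecreasing. *)

Section InnerProduct.
Variables (R : realDomainType) (m : nat).
Implicit Types u v : 'cV[R]_m.

Definition dotv u v : R := \sum_(a < m) u a 0 * v a 0.

Lemma dotvC u v : dotv u v = dotv v u.
Proof. by apply: eq_bigr => a _; rewrite mulrC. Qed.

Lemma dotvv_ge0 u : 0 <= dotv u u.
Proof. by apply: sumr_ge0 => a _; rewrite -expr2 sqr_ge0. Qed.

Lemma dotvZl (c : R) u v : dotv (c *: u) v = c * dotv u v.
Proof. by rewrite /dotv big_distrr; apply: eq_bigr => a _; rewrite mxE /= mulrA. Qed.

Lemma cauchy_schwarz u v : dotv u v ^+ 2 <= dotv u u * dotv v v.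
Proof.
pose x a := u a 0; pose y a := v a 0.
have sumM (F G : 'I_m -> R) : \sum_a \sum_b F a * G b = (\sum_a F a) * (\sum_b G b).
  by rewrite mulr_suml; apply: eq_bigr => a _; rewrite mulr_sumr.
have Eu : dotv u u = \sum_a x a ^+ 2 by apply: eq_bigr => a _; rewrite expr2.
have Ev : dotv v v = \sum_a y a ^+ 2 by apply: eq_bigr => a _; rewrite expr2.
have lagrange : \sum_a \sum_b (x a * y b - x b * y a) ^+ 2 =
    2 * (dotv u u * dotv v v - dotv u v ^+ 2).
  transitivity (\sum_a \sum_b (x a ^+ 2 * y b ^+ 2 + y a ^+ 2 * x b ^+ 2
                               - x a * y a * (2 * (x b * y b)))).
    by apply: eq_bigr => a _; apply: eq_bigr => b _; ring.
  under eq_bigr do rewrite sumrB big_split /=.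
  rewrite sumrB big_split /= !sumM -mulr_sumr Eu Ev /dotv; ring.
have : 0 <= \sum_a \sum_b (x a * y b - x b * y a) ^+ 2.
  by do 2![apply: sumr_ge0 => ? _]; exact: sqr_ge0.
rewrite lagrange; nra.
Qed.

Definition orthonormal_seq (s : seq 'cV[R]_m) : bool :=
  all (fun v => dotv v v == 1) s && pairwise (fun v w => dotv v w == 0) s.

End InnerProduct.

Section OrthonormalColumns.
Variables (R : realType) (p q : nat).
Implicit Types M N Q X : 'M[R]_(p, q).

Lemma mulTmx_entry M N j j' : (M^T *m N) j j' = dotv (col j M) (col j' N).
Proof. by rewrite mxE; apply: eq_bigr => a _; rewrite !mxE. Qed.

Lemma orthonormal_colsP M :
  reflect (orthonormal_cols M) (orthonormal_seq [seq col j M | j <- enum 'I_q]).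
Proof.
rewrite /orthonormal_seq all_map pairwise_map.
apply: (iffP andP) => [[/allP unit orth] | MM].
  have {}orth : all2rel (fun j j' => (j == j') || (dotv (col j M) (col j' M) == 0))
                       (enum 'I_q).
    rewrite -pairwise_all2rel => [|j|j j']; last by rewrite eq_sym dotvC.
    - by apply: sub_pairwise orth => j j' /= ->; rewrite orbT.
    - by rewrite eqxx.
  apply/matrixP => j j'; rewrite mulTmx_entry !mxE; case: eqVneq => [<-|ne].
    by apply/eqP/unit; rewrite mem_enum.
  by move/allrelP: orth => /(_ j j'); rewrite !mem_enum (negbTE ne) => /(_ isT isT) /eqP.
split; first by apply/allP => j _ /=; rewrite -mulTmx_entry MM !mxE eqxx.
have := enum_uniq 'I_q; rewrite uniq_pairwise; apply: sub_pairwise => j j' /= ne.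
by rewrite -mulTmx_entry MM !mxE (negbTE ne).
Qed.

Lemma mxtrace_mulTmx_ge0 N : 0 <= \tr (N^T *m N).
Proof. by apply: sumr_ge0 => j _; rewrite mulTmx_entry dotvv_ge0. Qed.

Lemma mxtrace_mulTmx_le Q M :
  orthonormal_cols Q -> orthonormal_cols M -> \tr (Q^T *m M) <= q%:R.
Proof.
move=> QQ MM; have := mxtrace_mulTmx_ge0 (Q - M).
rewrite (raddfB (@trmx _ p q)) /= mulmxBl !mulmxBr QQ MM !(raddfB (@mxtrace _ q)) /= mxtrace1.
by rewrite -[M^T *m Q]trmxK trmx_mul trmxK mxtrace_tr; lra.
Qed.

(* The regularisation term eps M is harmless because tr(Q^T M) <= q = tr(M^T M). *)
Lemma polar_regularized_trace_ge X M Q (eps : R) :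
  0 <= eps -> orthonormal_cols M -> polar (X + eps *: M) Q ->
  \tr (M^T *m X) <= \tr (Q^T *m X).
Proof.
move=> eps_ge0 MM [QQ Qmax]; have := Qmax _ MM.
rewrite !mulmxDr !mxtraceD -!scalemxAr !mxtraceZ MM mxtrace1.
have := mxtrace_mulTmx_le QQ MM; nra.
Qed.

End OrthonormalColumns.

Lemma vnorm_dotv (R : realType) m (v : 'cV[R]_m) : vnorm v = Num.sqrt (dotv v v).
Proof. by congr Num.sqrt; apply: eq_bigr => a _; rewrite expr2. Qed.

Lemma sg_div_sqrt_bounds (R : rcfType) (x s : R) :
  x ^+ 2 <= s ->
  (Num.sg x / Num.sqrt s) ^+ 2 * s <= 1 /\ x ^+ 2 <= (Num.sg x / Num.sqrt s * s) ^+ 2.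
Proof.
move=> le_xs; have s_ge0 : 0 <= s := le_trans (sqr_ge0 x) le_xs.
have [s0 | s_neq0] := eqVneq s 0; first by rewrite s0 in le_xs *; rewrite !mulr0 expr0n /= ler01.
set q := Num.sqrt s; have q_gt0 : 0 < q by rewrite sqrtr_gt0 lt_def s_neq0.
have sq : s = q ^+ 2 by rewrite sqr_sqrtr.
have -> : (Num.sg x / q) ^+ 2 * s = Num.sg x ^+ 2 by rewrite sq; field; rewrite gt_eqF.
have -> : (Num.sg x / q * s) ^+ 2 = Num.sg x ^+ 2 * s by rewrite sq; field; rewrite gt_eqF.
by rewrite sqr_sg; case: eqP => [-> | _]; rewrite /= ?mul1r; split; lra.
Qed.

Lemma ler_sqr_norm (R : realDomainType) (a x : R) :
  0 <= a -> (a ^+ 2 <= x ^+ 2) = (a <= `|x|).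
Proof. by move=> a_ge0; rewrite -(real_normK (num_real x)) ler_sqr // nnegrE. Qed.

Lemma sqr_mul_lt_of_lt_sqrt (R : rcfType) (x y z : R) :
  0 <= x -> 0 < y -> 0 < z -> x < Num.sqrt (y / z) -> z * x ^+ 2 < y.
Proof.
move=> x_ge0 y_gt0 z_gt0.
by rewrite -[x in x < _]ger0_norm // -sqrtr_sqr ltr_sqrt ?divr_gt0 // ltr_pdivlMr // mulrC.
Qed.

Section SeqSums.
Variables (R : realDomainType) (T : Type).
Implicit Types (F G : T -> R) (s : seq T).

Lemma sumr_const_seq s (x : R) : \sum_(c <- s) x = (size s)%:R * x.
Proof. by rewrite big_const_seq count_predT iter_addr_0 mulr_natl. Qed.

Lemma ler_sum_all (P : pred T) F G s :
  all P s -> (forall c, P c -> F c <= G c) -> \sum_(c <- s) F c <= \sum_(c <- s) G c.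
Proof. by move=> /all_filterP <- FG; rewrite !big_filter ler_sum. Qed.

Lemma ltr_sum_all F (x : R) s :
  (0 < size s)%N -> all (fun c => F c < x) s -> \sum_(c <- s) F c < (size s)%:R * x.
Proof.
case: s => [//|c s] _ /andP[Fc Fs]; rewrite -sumr_const_seq !big_cons.
by rewrite ltr_leD // (ler_sum_all Fs) // => c' /ltW.
Qed.

End SeqSums.

Section Tensor.
Variables (R : realType) (k : nat) (n : 'I_k -> nat) (A : tensor R n).
Implicit Types (c d : kcol R n) (i l : 'I_k) (U : seq (kcol R n)).
Local Notation with_mode c i w := (@dfwith _ (fun l => 'cV[R]_(n l)) c i w).
Local Notation c0 := (Defs.col0 R n).
Local Notation VLam U i := (Vmat A U i *m diag_mx (lamrow A U)).

Lemma tau_dotv_taui c i : tau A c = dotv (c i) (taui A c i).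
Proof.
rewrite /tau /dotv; under eq_bigr do rewrite (bigD1 i) //=.
rewrite (partition_big (fun idx : multi_index n => idx i) predT) //=.
apply: eq_bigr => a _; rewrite mxE big_distrr /=.
by apply: eq_bigr => idx /eqP <-; ring.
Qed.

Lemma eq_taui c d i : (forall l, l != i -> c l = d l) -> taui A c i = taui A d i.
Proof.
move=> cd; apply/matrixP => a b; rewrite !mxE; apply: eq_bigr => idx _.
by congr (_ * _); apply: eq_bigr => l /cd ->.
Qed.

Lemma with_mode_out c i w l : l != i -> with_mode c i w l = c l.
Proof. by move=> ne; rewrite dfwith_out // eq_sym. Qed.

Lemma tau_with_mode c i w : tau A (with_mode c i w) = dotv w (taui A c i).
Proof.
rewrite (tau_dotv_taui _ i) dfwith_in; congr dotv.
by apply: eq_taui => l; apply: with_mode_out.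
Qed.

Definition factor_cols U l : seq 'cV[R]_(n l) := [seq c l | c <- U].

Lemma nth_factor_cols U l j :
  (j < size U)%N -> nth (c0 l) (factor_cols U l) j = nth c0 U j l.
Proof. by move=> lt_j; rewrite (nth_map c0). Qed.

Lemma col_mx_of U i (j : 'I_(size U)) : col j (mx_of U i) = nth c0 U j i.
Proof. by apply/matrixP => a b; rewrite !mxE (ord1 b). Qed.

Lemma factor_cols_mx_of U i :
  factor_cols U i = [seq col j (mx_of U i) | j <- enum 'I_(size U)].
Proof.
rewrite -[LHS](mkseq_nth (c0 i)) /mkseq size_map -val_enum_ord -map_comp.
by apply: eq_map => j /=; rewrite nth_factor_cols // col_mx_of.
Qed.

Lemma orthonormal_factorP U i :
  reflect (orthonormal_cols (mx_of U i)) (orthonormal_seq (factor_cols U i)).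
Proof. by rewrite factor_cols_mx_of; apply: orthonormal_colsP. Qed.

Lemma size_upd_mode U i (M : 'M_(n i, size U)) : size (upd_mode M) = size U.
Proof. by rewrite size_map size_enum_ord. Qed.

Lemma factor_cols_upd_mode U i (M : 'M_(n i, size U)) :
  factor_cols (upd_mode M) i = [seq col j M | j <- enum 'I_(size U)].
Proof. by rewrite /factor_cols -map_comp; apply: eq_map => j /=; rewrite dfwith_in. Qed.

Lemma factor_cols_upd_mode_out U i (M : 'M_(n i, size U)) l :
  l != i -> factor_cols (upd_mode M) l = factor_cols U l.
Proof.
move=> ne; rewrite [RHS]factor_cols_mx_of /factor_cols -map_comp.
by apply: eq_map => j /=; rewrite with_mode_out // col_mx_of.
Qed.

Lemma fobj_nth U : fobj A U = \sum_(j < size U) tau A (nth c0 U j) ^+ 2.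
Proof. by rewrite /fobj (big_nth c0) big_mkord. Qed.

Lemma fobj_upd_mode U i (M : 'M_(n i, size U)) :
  fobj A (upd_mode M) =
  \sum_(j < size U) tau A (with_mode (nth c0 U j) i (col j M)) ^+ 2.
Proof. by rewrite /fobj big_map big_enum. Qed.

Lemma mxtrace_VLam U i (Q : 'M_(n i, size U)) :
  \tr (Q^T *m VLam U i) =
  \sum_(j < size U) tau A (with_mode (nth c0 U j) i (col j Q)) * tau A (nth c0 U j).
Proof.
apply: eq_bigr => j _; rewrite mxE tau_with_mode /dotv mulr_suml.
by apply: eq_bigr => a _; rewrite mul_mx_diag !mxE mulrA.
Qed.

Lemma mxtrace_VLam_self U i : \tr ((mx_of U i)^T *m VLam U i) = fobj A U.
Proof.
rewrite mxtrace_VLam fobj_nth; apply: eq_bigr => j _.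
by rewrite tau_with_mode col_mx_of -tau_dotv_taui expr2.
Qed.

(* With mu_j the new and lambda_j the old values, mu_j^2 >= 2 mu_j lambda_j - lambda_j^2
   and the trace is sum_j mu_j lambda_j. *)
Lemma fobj_upd_mode_ge U i (Q : 'M_(n i, size U)) :
  \tr ((mx_of U i)^T *m VLam U i) <= \tr (Q^T *m VLam U i) ->
  fobj A U <= fobj A (upd_mode Q).
Proof.
rewrite mxtrace_VLam_self mxtrace_VLam fobj_upd_mode fobj_nth.
set mu := fun j : 'I_(size U) => tau A (with_mode (nth c0 U j) i (col j Q)).
set la := fun j : 'I_(size U) => tau A (nth c0 U j).
have : \sum_j (2 * (mu j * la j) - la j ^+ 2) <= \sum_j mu j ^+ 2.
  by apply: ler_sum => j _; have := sqr_ge0 (mu j - la j); nra.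
by rewrite sumrB -mulr_sumr; lra.
Qed.

Lemma polar_step_upd_mode eps i U U' :
  0 <= eps -> orthonormal_cols (mx_of U i) -> polar_step A eps i U U' ->
  exists Q : 'M_(n i, size U), [/\ orthonormal_cols Q,
    \tr ((mx_of U i)^T *m VLam U i) <= \tr (Q^T *m VLam U i) & U' = upd_mode Q].
Proof.
move=> eps_ge0 UU [Q [[QQ Qmax] [small not_small]]].
case: (pselect (small_eig (Q^T *m VLam U i) eps)) => [/small | /not_small ->].
  move=> [Q2 [Q2polar ->]]; exists Q2; split => //; first exact: Q2polar.1.
  exact: polar_regularized_trace_ge Q2polar.
by exists Q; split => //; apply: Qmax.
Qed.

Lemma polar_step_spec eps i U U' :
  0 <= eps -> orthonormal_seq (factor_cols U i) -> polar_step A eps i U U' ->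
  [/\ size U' = size U, fobj A U <= fobj A U', orthonormal_seq (factor_cols U' i)
    & forall l, l != i -> factor_cols U' l = factor_cols U l].
Proof.
move=> eps_ge0 /orthonormal_factorP UU /(polar_step_upd_mode eps_ge0 UU).
move=> [Q [QQ le_tr ->]]; split.
- exact: size_upd_mode.
- exact: fobj_upd_mode_ge.
- by rewrite factor_cols_upd_mode; apply/orthonormal_colsP.
- exact: factor_cols_upd_mode_out.
Qed.

Section Iteration.
Variable smax : 'I_k.

(* Only the unit ball is invariant for the modes beyond smax: when A tau_i(x_j) = 0 the ALS
   update divides by vnorm 0 = 0 and produces a zero column. *)
Definition unit_ball_beyond c : bool :=
  [forall l : 'I_k, (smax < l)%N ==> (dotv (c l) (c l) <= 1)].

Definition als_mode_step c (i : 'I_k) : kcol R n :=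
  if (smax < i)%N then
    with_mode c i ((Num.sg (tau A c) / vnorm (taui A c i)) *: taui A c i)
  else c.

Lemma als_mode_step_low c i l : (l <= smax)%N -> als_mode_step c i l = c l.
Proof.
rewrite /als_mode_step; case: ltnP => // lt_i le_l.
by rewrite with_mode_out //; apply: contraTneq lt_i => <-; rewrite -leqNgt.
Qed.

Lemma als_mode_step_spec c i : unit_ball_beyond c ->
  unit_ball_beyond (als_mode_step c i) /\ tau A c ^+ 2 <= tau A (als_mode_step c i) ^+ 2.
Proof.
rewrite /als_mode_step => ball_c; case: ifP => // lt_i.
set v := taui A c i; have ci_le1 : dotv (c i) (c i) <= 1.
  by move/forallP: ball_c => /(_ i) /implyP /(_ lt_i).
have tau_le : tau A c ^+ 2 <= dotv v v.
  rewrite (tau_dotv_taui _ i); have := cauchy_schwarz (c i) v.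
  by have := dotvv_ge0 v; nra.
have [norm_le tau_ge] := sg_div_sqrt_bounds tau_le; rewrite vnorm_dotv; split.
  apply/forallP => l; apply/implyP => lt_l; have [-> | ne] := eqVneq l i.
    by rewrite dfwith_in dotvZl dotvC dotvZl mulrA -expr2.
  by rewrite with_mode_out //; move/forallP: ball_c => /(_ l) /implyP /(_ lt_l).
by rewrite tau_with_mode dotvZl.
Qed.

Lemma als_update_low c l : (l <= smax)%N -> als_update A smax c l = c l.
Proof.
rewrite /als_update -/als_mode_step; elim: (enum 'I_k) c => //= i s IH c le_l.
by rewrite IH // als_mode_step_low.
Qed.

Lemma als_update_spec c : unit_ball_beyond c ->
  unit_ball_beyond (als_update A smax c) /\ tau A c ^+ 2 <= tau A (als_update A smax c) ^+ 2.
Proof.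
rewrite /als_update -/als_mode_step; elim: (enum 'I_k) c => //= i s IH c ball_c.
have [ball_c' le_c'] := als_mode_step_spec i ball_c; have [ball_c'' le_c''] := IH _ ball_c'.
by split => //; exact: le_trans le_c' le_c''.
Qed.

Lemma unit_ball_transfer U U' :
  size U' = size U -> (forall l, (smax < l)%N -> factor_cols U' l = factor_cols U l) ->
  all unit_ball_beyond U -> all unit_ball_beyond U'.
Proof.
move=> eq_size eq_cols /(all_nthP c0) ball; apply/(all_nthP c0) => j lt_j.
have lt_j' : (j < size U)%N by rewrite -eq_size.
apply/forallP => l; apply/implyP => lt_l; move/forallP: (ball j lt_j') => /(_ l).
by rewrite lt_l -!(nth_factor_cols l) // eq_cols.
Qed.

Definition feasible U : Prop :=
  (forall l, (l <= smax)%N -> orthonormal_seq (factor_cols U l)) /\ all unit_ball_beyond U.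

Lemma feasible_mask m U : feasible U -> feasible (mask m U).
Proof.
move=> [orth ball]; split; last exact: all_mask.
move=> l /orth /andP[unit pw].
by rewrite /factor_cols map_mask /orthonormal_seq all_mask // pairwise_mask.
Qed.

Lemma feasible_als_update U : feasible U -> feasible (map (als_update A smax) U).
Proof.
move=> [orth ball]; split.
  move=> l le_l; rewrite /factor_cols -map_comp (eq_map (g := fun c => c l)) ?orth //.
  by move=> c /=; rewrite als_update_low.
by rewrite all_map; apply: sub_all ball => c /als_update_spec [].
Qed.

Lemma fobj_als_update_ge U :
  all unit_ball_beyond U -> fobj A U <= fobj A (map (als_update A smax) U).
Proof. by move=> ball; rewrite /fobj big_map; apply: (ler_sum_all ball) => c /als_update_spec []. Qed.

Lemma fobj_ge_size x U : all (fun c => x <= tau A c ^+ 2) U -> (size U)%:R * x <= fobj A U.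
Proof. by move=> large; rewrite -sumr_const_seq; apply: (ler_sum_all large). Qed.

Lemma feasible_init r U : init_ok smax r U -> feasible U.
Proof.
move=> [_ [orth unit]]; split=> [l /orth /orthonormal_factorP //|].
apply/(all_nthP c0) => j lt_j; apply/forallP => l; apply/implyP => lt_l.
have := unit l lt_l (Ordinal lt_j); rewrite col_mx_of vnorm_dotv.
by move/(congr1 (fun x => x ^+ 2)); rewrite sqr_sqrtr ?dotvv_ge0 // expr1n => ->.
Qed.

Section Sweep.
Variables eps kappa : R.
Hypotheses (eps_ge0 : 0 <= eps) (kappa_gt0 : 0 < kappa).

(* Mode smax does not enter A tau_smax, so the test value of a column is its own lambda. *)
Lemma truncateE prev cur :
  size prev = size cur -> (forall l, l != smax -> factor_cols prev l = factor_cols cur l) ->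
  truncate A smax kappa prev cur = [seq c <- cur | kappa <= `|tau A c|].
Proof.
move=> eq_size eq_cols.
rewrite /truncate !filter_mask map_mask -/(unzip2 _) unzip2_zip ?eq_size //; congr mask.
apply: (@eq_from_nth _ false) => [|j]; rewrite !size_map size_zip eq_size minnn // => lt_j.
rewrite (nth_map (c0, c0)) ?size_zip ?eq_size ?minnn // (nth_map c0) // nth_zip //=.
rewrite (tau_dotv_taui _ smax) (@eq_taui (nth c0 prev j) (nth c0 cur j)) // => l ne.
by rewrite -!(nth_factor_cols l) ?eq_size // eq_cols.
Qed.

Lemma size_truncated_gt0 U :
  (0 < size U)%N -> (size U)%:R * kappa ^+ 2 <= fobj A U ->
  (0 < size [seq c <- U | (kappa <= `|tau A c|)%R])%N.
Proof.
move=> U_gt0 le_f; rewrite size_filter -has_count; apply/negPn/negP.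
rewrite -all_predC => small; suff : fobj A U < (size U)%:R * kappa ^+ 2 by rewrite ltNge le_f.
apply: ltr_sum_all U_gt0 _; apply: sub_all small => c /=.
by rewrite ltNge (ler_sqr_norm _ (ltW kappa_gt0)).
Qed.

Lemma polar_sweep_spec U (curs : nat -> seq (kcol R n)) :
  feasible U -> curs 0%N = U ->
  (forall i : 'I_k, (i <= smax)%N -> polar_step A eps i (curs i) (curs i.+1)) ->
  forall m, (m <= smax.+1)%N ->
  [/\ feasible (curs m), size (curs m) = size U & fobj A U <= fobj A (curs m)].
Proof.
move=> feasU curs0 polar; elim=> [|m IH] le_m; first by rewrite curs0.
have [[orth ball] eq_size le_f] := IH (ltnW le_m).
pose i : 'I_k := Ordinal (leq_ltn_trans (le_m : (m <= smax)%N) (ltn_ord smax)).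
have [size' le_f' orth' cols'] := polar_step_spec eps_ge0 (orth i le_m) (polar i le_m).
split; [split | by rewrite size' | exact: le_trans le_f le_f'].
  by move=> l le_l; have [-> // | ne] := eqVneq l i; rewrite cols' // orth.
apply: unit_ball_transfer ball => // l lt_l; apply: cols'.
by apply: contraTneq lt_l => ->; rewrite -leqNgt.
Qed.

Lemma iapd_step_truncates U U' :
  feasible U -> iapd_step A smax eps kappa U U' ->
  exists2 V, [/\ feasible V, size V = size U & fobj A U <= fobj A V] &
    U' = map (als_update A smax) [seq c <- V | (kappa <= `|tau A c|)%R].
Proof.
move=> feasU [curs [curs0 [polar ->]]].
have [feas_s size_s _] := polar_sweep_spec feasU curs0 polar (leqnSn smax).
have [feas_s1 size_s1 le_f] := polar_sweep_spec feasU curs0 polar (leqnn smax.+1).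
have [_ _ _ cols] := polar_step_spec eps_ge0 (feas_s.1 smax (leqnn _)) (polar smax (leqnn _)).
by exists (curs smax.+1) => //; rewrite truncateE ?size_s ?size_s1 // => l /cols ->.
Qed.

Lemma iapd_step_spec U U' :
  feasible U -> iapd_step A smax eps kappa U U' ->
  [/\ feasible U', (size U' <= size U)%N, (size U' = size U -> fobj A U <= fobj A U')
    & (size U')%:R * kappa ^+ 2 <= fobj A U'].
Proof.
move=> feasU /(iapd_step_truncates feasU) [V [feasV sizeV le_fV] ->].
have feasT : feasible [seq c <- V | (kappa <= `|tau A c|)%R].
  by rewrite filter_mask; apply: feasible_mask.
rewrite size_map; split.
- exact: feasible_als_update.
- by rewrite -sizeV size_filter count_size.
- rewrite -sizeV size_filter => /eqP; rewrite -all_count => /all_filterP ->.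
  exact: le_trans le_fV (fobj_als_update_ge feasV.2).
- apply: le_trans (fobj_als_update_ge feasT.2); apply: fobj_ge_size.
  by apply: sub_all (filter_all _ _) => c /=; rewrite ler_sqr_norm // ltW.
Qed.

Lemma iapd_step_size_gt0 U U' :
  feasible U -> iapd_step A smax eps kappa U U' ->
  (0 < size U)%N -> (size U)%:R * kappa ^+ 2 <= fobj A U -> (0 < size U')%N.
Proof.
move=> feasU /(iapd_step_truncates feasU) [V [_ sizeV le_fV] ->] U_gt0 le_f.
by rewrite size_map size_truncated_gt0 ?sizeV // (le_trans le_f).
Qed.

End Sweep.

End Iteration.

End Tensor.

Lemma nonincreasing_nat_stable (f : nat -> nat) :
  (forall p, (f p.+1 <= f p)%N) -> exists N, forall p, (N <= p)%N -> f p = f N.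
Proof.
move=> f_dec; have f_homo := homo_leq (r := fun a b => b <= a)%N leqnn
  (fun _ _ _ le_yx le_zy => leq_trans le_zy le_yx) f_dec.
have attained : exists v, `[< exists p, f p = v >] by exists (f 0%N); apply/asboolP; exists 0%N.
case: (ex_minnP attained) => v /asboolP [N <-] min_v; exists N => p le_Np.
by apply/eqP; rewrite eqn_leq f_homo // min_v //; apply/asboolP; exists p.
Qed.

Theorem proposition5p5 (R : realType) (k : nat) (n : 'I_k -> nat) (smax : 'I_k)
    (r : nat) (A : tensor R n) (eps kappa : R) (U : nat -> seq (kcol R n)) :
  (3 <= k)%N ->
  (forall i : 'I_k, (i <= smax)%N -> (r <= n i)%N) ->
  A != 0 ->
  0 < eps ->
  init_ok smax r (U 0%N) ->
  0 < fobj A (U 0%N) ->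
  0 < kappa -> kappa < Num.sqrt (fobj A (U 0%N) / r%:R) ->
  (forall p, iapd_step A smax eps kappa (U p) (U p.+1)) ->
  exists t : nat,
    (0 < t <= r)%N /\
    (exists N : nat, forall p, (N <= p)%N -> size (U p) = t) /\
    (exists N0 : nat, forall p, (N0 <= p)%N -> fobj A (U p) <= fobj A (U p.+1)).
Proof.
move=> _ _ _ /ltW eps_ge0 init0 f0_gt0 kappa_gt0 kappa_lt step.
have size0 : size (U 0%N) = r by case: init0.
have r_gt0 : (0 < r)%N.
  by rewrite -size0 lt0n; apply: contraTneq f0_gt0 => /size0nil ->; rewrite /fobj big_nil ltxx.
have inv p : [/\ feasible smax (U p), (0 < size (U p) <= r)%N
                & (size (U p))%:R * kappa ^+ 2 <= fobj A (U p)].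
  elim: p => [|p [feas /andP[size_gt0 size_le] bound]].
    rewrite size0 r_gt0 leqnn; split=> //; first exact: feasible_init init0.
    by apply/ltW/(sqr_mul_lt_of_lt_sqrt _ _ _ kappa_lt); rewrite ?ltW ?ltr0n.
  have [feas' size' _ bound'] := iapd_step_spec eps_ge0 kappa_gt0 feas (step p).
  split=> //; rewrite (iapd_step_size_gt0 eps_ge0 kappa_gt0 feas (step p)) //.
  exact: leq_trans size' size_le.
have size_dec p : (size (U p.+1) <= size (U p))%N.
  by have [feas _ _] := inv p; have [] := iapd_step_spec eps_ge0 kappa_gt0 feas (step p).
have [N stable] := nonincreasing_nat_stable size_dec.
exists (size (U N)); split; [by case: (inv N) | split; [by exists N | exists N => p le_Np]].
have [feas _ _] := inv p; have [_ _ mono _] := iapd_step_spec eps_ge0 kappa_gt0 feas (step p).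
by apply: mono; rewrite !stable // (leq_trans le_Np).
Qed.
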